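(* Let $(\mathcal A,(p_n))$ be a Fréchet algebra and $I$ a closed ideal of $\mathcal A$. Then $\mathcal A$ has a bounded approximate diagonal modulo $I$ if and only if there exists a bounded set $B\subseteq\frac{\mathcal A}{I}\widehat\otimes\frac{\mathcal A}{I}$ such that for each finite set $F\subseteq\mathcal A\setminus I$, each $n\in\mathbb N$ and each $\varepsilon>0$ there exists $M\in B$ with $\hat r_n(a\cdot M-M\cdot a)<\varepsilon$ for all $a\in F$ and $\hat p_n(a\cdot\pi_{\mathcal A/I}(M)-\tilde a)<\varepsilon$ for all $a\in\mathcal A$, where $\tilde a=a+I$.
   Context: A Fréchet algebra $(\mathcal A,(p_n))$ is a complete Hausdorff topological algebra whose topology is given by an increasing sequence of submultiplicative seminorms $p_n$. For a closed ideal $I$, $\mathcal A/I$ is a Fréchet algebra with seminorms $\hat p_n(a+I)=\inf\{p_n(a+b):b\in I\}$. $\frac{\mathcal A}{I}\widehat\otimes\frac{\mathcal A}{I}$ is the completed projective tensor product with seminorms $\hat r_n(M)=\inf\{\sum_i\hat p_n(x_i)\hat p_n(y_i):M=\sum_i x_i\otimes y_i\}$, an $\mathcal A$-bimodule via $a\cdot((b+I)\otimes(c+I))=(ab+I)\otimes(c+I)$, $((b+I)\otimes(c+I))\cdot a=(b+I)\otimes(ca+I)$; $\mathcal A$ acts on $\mathcal A/I$ by $a\cdot(b+I)=ab+I$; $\pi_{\mathcal A/I}$ is the continuous linear map $(b+I)\otimes(c+I)\mapsto bc+I$. A set is bounded if each $\hat r_n$ is bounded on it. $\mathcal A$ has a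 bounded approximate diagonal modulo $I$ if there is a bounded net $(m_\alpha)$ in $\frac{\mathcal A}{I}\widehat\otimes\frac{\mathcal A}{I}$ with $a\cdot\pi_{\mathcal A/I}(m_\alpha)-\tilde a\to0$ for all $a\in\mathcal A$ and $a\cdot m_\alpha-m_\alpha\cdot a\to0$ for all $a\in\mathcal A\setminus I$. *)

From HB Require Import structures.
From mathcomp Require Import all_boot all_order all_algebra.
From mathcomp Require Import complex.
From mathcomp Require Import boolp classical_sets cardinality reals.

Set Implicit Arguments.
Unset Strict Implicit.
Unset Printing Implicit Defensive.

Import Order.TTheory GRing.Theory Num.Theory.
Local Open Scope ring_scope.
Local Open Scope classical_set_scope.

(* Scalar field: the complex numbers R[i] over a real field R : realType.
   |z| is the modulus, a nonnegative real. *)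
Definition cmod (R : realType) (z : R[i]) : R := complex.Re `|z|.

Section FrechetAlgebra.
Variables (R : realType) (A : lmodType R[i]).

Definition is_algebra_mul (mul : A -> A -> A) : Prop :=
  [/\ (forall x y z, mul (mul x y) z = mul x (mul y z)),
      (forall x y z, mul (x + y) z = mul x z + mul y z),
      (forall x y z, mul x (y + z) = mul x y + mul x z),
      (forall (l : R[i]) x y, mul (l *: x) y = l *: mul x y) &
      (forall (l : R[i]) x y, mul x (l *: y) = l *: mul x y)].

Definition is_seminorm (q : A -> R) : Prop :=
  [/\ (forall x, 0 <= q x),
      (forall x y, q (x + y) <= q x + q y) &
      (forall (l : R[i]) x, q (l *: x) = cmod l * q x)].

Definition seq_converges (p : nat -> A -> R) (u : nat -> A) (x : A) : Prop :=
  forall n (eps : R), 0 < eps ->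
    exists N, forall k, (N <= k)%N -> p n (u k - x) < eps.

Definition seq_cauchy (p : nat -> A -> R) (u : nat -> A) : Prop :=
  forall n (eps : R), 0 < eps ->
    exists N, forall k l, (N <= k)%N -> (N <= l)%N -> p n (u k - u l) < eps.

Definition frechet_algebra (mul : A -> A -> A) (p : nat -> A -> R) : Prop :=
  [/\ is_algebra_mul mul /\ (forall n, is_seminorm (p n)),
      (forall n x y, p n (mul x y) <= p n x * p n y),
      (forall n x, p n x <= p n.+1 x),
      (forall x, (forall n, p n x = 0) -> x = 0) &
      (forall u, seq_cauchy p u -> exists x, seq_converges p u x)].

Definition closed_ideal (mul : A -> A -> A) (p : nat -> A -> R) (I : set A) :
  Prop :=
  [/\ I 0,
      (forall x y, I x -> I y -> I (x + y)),
      (forall (l : R[i]) x, I x -> I (l *: x)),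
      (forall a x, I x -> I (mul a x) /\ I (mul x a)) &
      (forall u x, (forall k, I (u k)) -> seq_converges p u x -> I x)].

Variables (mul : A -> A -> A) (p : nat -> A -> R) (I : set A).

(** ** The quotient A/I.  An element b + I of A/I is represented by b : A. *)

Definition qsn (n : nat) (b : A) : R := inf [set p n (b + c) | c in I].

(** Every element of E \hat\otimes_pi F (E, F Fréchet) is the sum of a series
   M = \sum_i x_i \otimes y_i with \sum_i \hat p_n(x_i) \hat p_n(y_i) < oo
   for every n; two such series define the same element iff every
   continuous bilinear form on A/I x A/I takes the same value on them
   (Hahn-Banach: the dual of E \hat\otimes_pi F is the space of continuous
   bilinear forms).  A series is given by its terms
   S : nat -> A * A, S i = (x_i, y_i) (representatives in A of elements of
   A/I). *)

Definition tterm (n : nat) (S : nat -> A * A) (i : nat) : R :=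
  qsn n (S i).1 * qsn n (S i).2.

Definition tsummable (S : nat -> A * A) : Prop :=
  forall n, exists C : R, forall N, \sum_(i < N) tterm n S i <= C.

Definition tsum (n : nat) (S : nat -> A * A) : R :=
  sup [set \sum_(i < N) tterm n S i | N in [set: nat]].

(* continuous bilinear forms on A/I x A/I (viewed as forms on A x A
   vanishing when one argument lies in I) *)
Definition cont_bilinear_Q (phi : A -> A -> R[i]) : Prop :=
  [/\ (forall x y z, phi (x + y) z = phi x z + phi y z) /\
      (forall x y z, phi x (y + z) = phi x y + phi x z),
      (forall (l : R[i]) x y, phi (l *: x) y = l * phi x y),
      (forall (l : R[i]) x y, phi x (l *: y) = l * phi x y),
      (forall x y, I x \/ I y -> phi x y = 0) &
      (exists n (C : R), forall x y,
          cmod (phi x y) <= C * qsn n x * qsn n y)].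

Definition tequiv (S T : nat -> A * A) : Prop :=
  forall phi, cont_bilinear_Q phi ->
    forall eps : R, 0 < eps -> exists N0, forall N, (N0 <= N)%N ->
      cmod (\sum_(i < N) phi (S i).1 (S i).2 -
            \sum_(i < N) phi (T i).1 (T i).2) < eps.

Definition rhat (n : nat) (S : nat -> A * A) : R :=
  inf [set tsum n T | T in [set T | tsummable T /\ tequiv T S]].

Definition lact (a : A) (S : nat -> A * A) : nat -> A * A :=
  fun i => (mul a (S i).1, (S i).2).
Definition ract (S : nat -> A * A) (a : A) : nat -> A * A :=
  fun i => ((S i).1, mul (S i).2 a).
(* S - T : the series S_0, -T_0, S_1, -T_1, ... *)
Definition tsub (S T : nat -> A * A) : nat -> A * A :=
  fun i => if odd i then (- (T i./2).1, (T i./2).2) else S i./2.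

(* c + I = \pi_{A/I}(M), i.e. \sum_i x_i y_i + I converges to c + I in A/I *)
Definition is_piQ (S : nat -> A * A) (c : A) : Prop :=
  forall n (eps : R), 0 < eps -> exists N0, forall N, (N0 <= N)%N ->
    qsn n (\sum_(i < N) mul (S i).1 (S i).2 - c) < eps.

Definition tbounded (B : set (nat -> A * A)) : Prop :=
  (forall S, B S -> tsummable S) /\
  (forall n, exists C : R, forall S, B S -> rhat n S <= C).

Definition directed_set (D : Type) (le : D -> D -> Prop) : Prop :=
  [/\ inhabited D, (forall x, le x x),
      (forall x y z, le x y -> le y z -> le x z) &
      (forall x y, exists z, le x z /\ le y z)].

Definition bounded_approximate_diagonal_mod : Prop :=
  exists (D : Type) (le : D -> D -> Prop) (m : D -> nat -> A * A),
    [/\ directed_set le,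
        tbounded (range m),
        (forall a n (eps : R), 0 < eps -> exists al0, forall al, le al0 al ->
           forall c, is_piQ (m al) c -> qsn n (mul a c - a) < eps) &
        (forall a, ~ I a -> forall n (eps : R), 0 < eps ->
           exists al0, forall al, le al0 al ->
             rhat n (tsub (lact a (m al)) (ract (m al) a)) < eps)].

End FrechetAlgebra.

From HB Require Import structures.
From mathcomp Require Import all_boot all_order all_algebra.
From mathcomp Require Import complex.
From mathcomp Require Import boolp classical_sets cardinality reals.
Import Order.TTheory GRing.Theory Num.Theory.
Local Open Scope ring_scope.
Local Open Scope classical_set_scope.

(* Both directions are bookkeeping with nets.  A net satisfies finitely many
   eventual conditions simultaneously, so a bounded approximate diagonal
   yields the approximants of the right-hand side for each finite F, n, eps.
   Conversely, choosing an approximant m(F, n) for the tolerance 1/(n+1) and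
   ordering the pairs (F, n) by inclusion and size gives a net, which is an
   approximate diagonal because the seminorms of A/I and of the projective
   tensor product increase with n. *)

Set Implicit Arguments.
Unset Strict Implicit.
Unset Printing Implicit Defensive.

Section Extrema.
Variable R : realType.

Lemma le_inf_image (T : Type) (S : set T) (f g : T -> R) :
  (exists k, forall x, S x -> k <= f x) -> (forall x, S x -> f x <= g x) ->
  inf (f @` S) <= inf (g @` S).
Proof.
move=> [k fk] fg; have [->|/set0P[x0 Sx0]] := eqVneq S set0.
  by rewrite !image_set0.
apply: lb_le_inf; first by exists (g x0), x0.
move=> _ [x Sx <-]; apply: le_trans (fg x Sx).
by apply: ge_inf; [exists k => _ [y Sy <-]; exact: fk | exists x].
Qed.

Lemma le_sup_image (T : Type) (S : set T) (f g : T -> R) :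
  S !=set0 -> (exists k, forall x, S x -> g x <= k) ->
  (forall x, S x -> f x <= g x) -> sup (f @` S) <= sup (g @` S).
Proof.
move=> [x0 Sx0] [k gk] fg; apply: ge_sup; first by exists (f x0), x0.
move=> _ [x Sx <-]; apply: le_trans (fg x Sx) _.
by apply: ub_le_sup; [exists k => _ [y Sy <-]; exact: gk | exists x].
Qed.

Lemma inv_succ_lt (eps : R) : 0 < eps ->
  exists k0, forall k, (k0 <= k)%N -> k.+1%:R^-1 < eps.
Proof.
move=> /ltr_add_invr[k0]; rewrite add0r => k0eps; exists k0 => k k0k.
by apply: le_lt_trans k0eps; rewrite lef_pV2 ?ler_nat ?ltnS ?posrE ?ltr0n.
Qed.

Lemma homo_lt_inv_succ (eps : R) n : 0 < eps ->
  exists k0, forall (q : nat -> R), {homo q : i j / (i <= j)%N >-> i <= j} ->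
  forall k, (k0 <= k)%N -> q k < k.+1%:R^-1 -> q n < eps.
Proof.
move=> /inv_succ_lt[k0 k0eps]; exists (maxn n k0) => q q_homo k.
rewrite geq_max => /andP[nk k0k] qk.
by apply: le_lt_trans (q_homo _ _ nk) (lt_trans qk (k0eps _ k0k)).
Qed.

End Extrema.

Section Seminorm.
Variables (R : realType) (A : lmodType R[i]) (q : A -> R).
Hypothesis q_seminorm : is_seminorm q.

Lemma seminorm_ge0 x : 0 <= q x.
Proof. by case: q_seminorm. Qed.

Lemma seminorm0 : q 0 = 0.
Proof.
case: q_seminorm => _ _ /(_ 0 0); rewrite scale0r => ->.
by rewrite /cmod normr0 mul0r.
Qed.

End Seminorm.

Section QuotientSeminorms.
Variables (R : realType) (A : lmodType R[i]) (p : nat -> A -> R) (I : set A).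
Hypotheses (p_seminorm : forall n, is_seminorm (p n))
           (p_incr : forall n x, p n x <= p n.+1 x)
           (I0 : I 0) (IN : forall x, I x -> I (- x)).

Lemma qsn_ge0 n b : 0 <= qsn p I n b.
Proof.
apply: lb_le_inf; first by exists (p n (b + 0)), 0.
by move=> _ [c _ <-]; exact: seminorm_ge0.
Qed.

Lemma qsn_homo b : {homo qsn p I ^~ b : n m / (n <= m)%N >-> n <= m}.
Proof.
apply: homo_leq => [x|y x z|n]; [exact: le_refl | exact: le_trans |].
apply: le_inf_image => [|c _]; last exact: p_incr.
by exists 0 => c _; exact: seminorm_ge0.
Qed.

Lemma qsn_eq0 n b : I b -> qsn p I n b = 0.
Proof.
move=> Ib; apply/eqP; rewrite eq_le qsn_ge0 andbT.
have <- : p n (b + - b) = 0 by rewrite subrr (seminorm0 (p_seminorm n)).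
apply: ge_inf; first by exists 0 => _ [c _ <-]; exact: seminorm_ge0.
by exists (- b); first exact: IN.
Qed.

Lemma tsum_ge0 n T : tsummable p I T -> 0 <= tsum p I n T.
Proof.
move=> /(_ n)[C sumC]; apply: ub_le_sup; last by exists 0%N => //; rewrite big_ord0.
by exists C => _ [N _ <-].
Qed.

Lemma tsum_homo T : tsummable p I T ->
  {homo tsum p I ^~ T : n m / (n <= m)%N >-> n <= m}.
Proof.
move=> T_summable; apply: homo_leq => [x|y x z|n]; [exact: le_refl | exact: le_trans |].
apply: le_sup_image; first by exists 0%N.
  by have [C sumC] := T_summable n.+1; exists C => N _; exact: sumC.
move=> N _; apply: ler_sum => i _; rewrite ler_pM ?qsn_ge0 //; exact: qsn_homo.
Qed.

Lemma rhat_homo S : {homo rhat p I ^~ S : n m / (n <= m)%N >-> n <= m}.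
Proof.
move=> n m nm; apply: le_inf_image => [|T [T_summable _]].
  by exists 0 => T [T_summable _]; exact: tsum_ge0.
exact: tsum_homo.
Qed.

End QuotientSeminorms.

Section Nets.
Variables (D : Type) (le : D -> D -> Prop).
Hypothesis le_directed : directed_set le.

Definition net_eventually (P : D -> Prop) : Prop :=
  exists d0, forall d, le d0 d -> P d.

Lemma net_eventually_and (P Q : D -> Prop) :
  net_eventually P -> net_eventually Q -> net_eventually (fun d => P d /\ Q d).
Proof.
case: le_directed => _ _ le_trans le_join [dP evP] [dQ evQ].
have [d0 [dPd0 dQd0]] := le_join dP dQ.
by exists d0 => d d0d; split; [apply: evP | apply: evQ]; exact: le_trans d0d.
Qed.

Lemma net_eventually_all (T : eqType) (F : set T) (P : T -> D -> Prop) :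
  finite_set F -> (forall a, F a -> net_eventually (P a)) ->
  net_eventually (fun d => forall a, F a -> P a d).
Proof.
move=> /finite_seqP[s ->]; elim: s => [|x s IH] evP.
  by case: le_directed => -[d0] _ _ _; exists d0.
have [d0 d0_ev] : net_eventually (fun d => P x d /\ forall a, a \in s -> P a d).
  apply: net_eventually_and; first by apply: evP; rewrite /= mem_head.
  by apply: IH => a sa; apply: evP; rewrite /= in_cons sa orbT.
exists d0 => d /d0_ev[Pxd Psd] a /=; rewrite in_cons => /orP[/eqP -> //|].
exact: Psd.
Qed.

Lemma net_eventually_witness (P : D -> Prop) : net_eventually P -> exists d, P d.
Proof. by case: le_directed => _ le_refl _ _ [d0 evP]; exists d0; exact: evP. Qed.

End Nets.

Definition approx_index_le (T : eqType) (d1 d2 : seq T * nat) : Prop :=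
  {subset d1.1 <= d2.1} /\ (d1.2 <= d2.2)%N.

Lemma approx_index_le_directed (T : eqType) : directed_set (@approx_index_le T).
Proof.
split=> [|d|d1 d2 d3 [s12 n12] [s23 n23]|d1 d2].
- exact: inhabits ([::], 0%N).
- by split.
- by split=> [a /s12 /s23 //|]; exact: leq_trans n23.
- exists (d1.1 ++ d2.1, maxn d1.2 d2.2).
  by split; split=> [a da|] /=; rewrite ?mem_cat ?da ?orbT ?leq_maxl ?leq_maxr.
Qed.

Section Diagonal.
Variables (R : realType) (A : lmodType R[i]) (mul : A -> A -> A)
          (p : nat -> A -> R) (I : set A).

Lemma tbounded_sub (B1 B2 : set (nat -> A * A)) :
  B1 `<=` B2 -> tbounded p I B2 -> tbounded p I B1.
Proof.
move=> B12 [B2_summable B2_bounded]; split=> [S /B12|n]; first exact: B2_summable.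
by have [C B2C] := B2_bounded n; exists C => S /B12; exact: B2C.
Qed.

Lemma approximate_diagonal_approximants :
  bounded_approximate_diagonal_mod mul p I ->
  exists B : set (nat -> A * A),
    tbounded p I B /\
    forall F : set A, finite_set F -> F `<=` ~` I ->
    forall (n : nat) (eps : R), 0 < eps ->
    exists M, B M /\
      (forall a, F a -> rhat p I n (tsub (lact mul a M) (ract mul M a)) < eps) /\
      (forall a, F a -> forall c, is_piQ mul p I M c ->
                   qsn p I n (mul a c - a) < eps).
Proof.
move=> [D [le [m [le_directed m_bounded m_pi m_comm]]]].
exists (range m); split=> // F F_fin F_nI n eps eps0.
have [d d_approx] : exists d, forall a, F a ->
    rhat p I n (tsub (lact mul a (m d)) (ract mul (m d) a)) < eps /\
    (forall c, is_piQ mul p I (m d) c -> qsn p I n (mul a c - a) < eps).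
  apply: (net_eventually_witness le_directed).
  apply: (net_eventually_all le_directed) => // a Fa.
  apply: (net_eventually_and le_directed); last exact: m_pi.
  exact: m_comm (F_nI a Fa) n eps eps0.
by exists (m d); split; [exists d | split=> a /d_approx[]].
Qed.

Lemma approximants_approximate_diagonal (B : set (nat -> A * A)) :
  frechet_algebra mul p -> closed_ideal mul p I -> tbounded p I B ->
  (forall F : set A, finite_set F -> F `<=` ~` I ->
   forall (n : nat) (eps : R), 0 < eps ->
   exists M, B M /\
     (forall a, F a -> rhat p I n (tsub (lact mul a M) (ract mul M a)) < eps) /\
     (forall a, F a -> forall c, is_piQ mul p I M c ->
                  qsn p I n (mul a c - a) < eps)) ->
  bounded_approximate_diagonal_mod mul p I.
Proof.
move=> [[_ p_seminorm] _ p_incr _ _] [I0 I_add I_scale I_mul _] B_bounded B_approx.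
have I_opp x : I x -> I (- x) by rewrite -scaleN1r; exact: I_scale.
have approximant (d : seq A * nat) : exists M, B M /\
    (forall a, a \in d.1 -> ~ I a ->
       rhat p I d.2 (tsub (lact mul a M) (ract mul M a)) < d.2.+1%:R^-1) /\
    (forall a, a \in d.1 -> ~ I a -> forall c, is_piQ mul p I M c ->
       qsn p I d.2 (mul a c - a) < d.2.+1%:R^-1).
  have [|||M [BM [M_comm M_pi]]] := B_approx [set a | a \in d.1 /\ ~ I a] _ _ d.2 d.2.+1%:R^-1.
  - by apply: sub_finite_set (finite_seq d.1) => a [].
  - by move=> a [].
  - by rewrite invr_gt0 ltr0n.
  by exists M; split=> //; split=> a da nIa; [apply: M_comm | apply: M_pi].
have [m m_approx] := choice approximant.
exists (seq A * nat)%type, (@approx_index_le A), m; split.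
- exact: approx_index_le_directed.
- by apply: tbounded_sub B_bounded => _ [d _ <-]; case: (m_approx d).
- move=> a n eps eps0; have [Ia|nIa] := pselect (I a).
    exists ([::], 0%N) => d _ c _; rewrite qsn_eq0 //.
    by apply: I_add; [exact: (I_mul c a Ia).2 | exact: I_opp].
  have [k0 k0_small] := homo_lt_inv_succ n eps0.
  exists ([:: a], k0) => d [ad k0d] c c_pi.
  apply: (k0_small (qsn p I ^~ (mul a c - a))) k0d _; first exact: qsn_homo.
  by apply: (m_approx d).2.2 => //; apply: ad; rewrite mem_head.
- move=> a nIa n eps eps0; have [k0 k0_small] := homo_lt_inv_succ n eps0.
  exists ([:: a], k0) => d [ad k0d].
  apply: (k0_small (rhat p I ^~ _)) k0d _; first exact: rhat_homo.
  by apply: (m_approx d).2.1 => //; apply: ad; rewrite mem_head.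
Qed.

End Diagonal.

Theorem proposition2p4 (R : realType) (A : lmodType R[i])
    (mul : A -> A -> A) (p : nat -> A -> R) (I : set A)
    (HA : frechet_algebra mul p) (HI : closed_ideal mul p I) :
  bounded_approximate_diagonal_mod mul p I <->
  exists B : set (nat -> A * A),
    tbounded p I B /\
    forall F : set A, finite_set F -> F `<=` ~` I ->
    forall (n : nat) (eps : R), 0 < eps ->
    exists M, B M /\
      (forall a, F a -> rhat p I n (tsub (lact mul a M) (ract mul M a)) < eps) /\
      (forall a, F a -> forall c, is_piQ mul p I M c ->
                   qsn p I n (mul a c - a) < eps).
Proof.
split; first exact: approximate_diagonal_approximants.
by move=> [B [B_bounded B_approx]]; exact: approximants_approximate_diagonal HA HI B_bounded B_approx.
Qed.
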